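(* Let $\mathcal{X}=G^{\min}/P$ be the affine Grassmannian of the minimal affine Kac–Moody group $\widehat{SL_2}$, and let $c^k_{n,m}\in\mathbb{Z}[\alpha_0,\alpha_1]$ be the $T$-equivariant Schubert structure constants, $\hat{\varepsilon}_n\cdot\hat{\varepsilon}_m=\sum_{k=\max\{n,m\}}^{n+m}c^k_{n,m}\hat{\varepsilon}_k$. Then for all integers $n,m\ge1$, $c^{n+m}_{n,m}=\binom{n+m}{n}$ and $$c^{n+m-1}_{n,m}= \begin{cases} \frac{1}{4}\cdot\frac{(n+m)!}{(n-1)!(m-1)!}(\alpha_0+\alpha_1) & n,m\text{ even},\\[1ex] \frac{1}{4}\cdot\frac{(n+m)!}{n!\,m!}\big((1+nm)\alpha_0+(-1+nm)\alpha_1\big) & n,m\text{ odd},\\[1ex] \frac{1}{4}\cdot\frac{(n+m-1)!}{(n-1)!\,m!}\big((-1+nm+m^2)\alpha_0+(1+nm+m^2)\alpha_1\big) & n\text{ even}, m\text{ odd},\\[1ex] \frac{1}{4}\cdot\frac{(n+m-1)!}{n!\,(m-1)!}\big((-1+nm+n^2)\alpha_0+(1+nm+n^2)\alpha_1\big) & n\text{ odd}, m\text{ even}. \end{cases}$$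
   Context: $T$ is the adjoint torus of $\widehat{SL_2}$, $H^\bullet_T(\mathrm{pt})=\mathbb{Z}[\alpha_0,\alpha_1]$ (polynomials in the simple roots), and $\{\hat{\varepsilon}_i\}_{i\ge0}$ is the $T$-equivariant Schubert basis of $H^\bullet_T(\mathcal{X})$ (Kumar's basis), indexed by $w_i$, the alternating word of length $i$ in $s_0,s_1$ ending in $s_0$, where $P$ is the maximal parabolic with Weyl group $\{e,s_1\}$. It satisfies $\hat\varepsilon_0=1$ and the equivariant Chevalley formula $\hat{\varepsilon}_1\cdot\hat{\varepsilon}_m=q_m\hat{\varepsilon}_m+(m+1)\hat{\varepsilon}_{m+1}$ with $q_m=\lceil m/2\rceil^2\alpha_0+(\lfloor m/2\rfloor^2+\lfloor m/2\rfloor)\alpha_1$. The constant $c^k_{n,m}$ is homogeneous of degree $n+m-k$ in $\alpha_0,\alpha_1$. *)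

From HB Require Import structures.
From mathcomp Require Import all_boot all_order all_algebra.
From mathcomp Require Import mpoly.
Set Implicit Arguments. Unset Strict Implicit. Unset Printing Implicit Defensive.
Import Order.TTheory GRing.Theory Num.Theory.
Local Open Scope ring_scope.

(* H^*_T(pt) = Z[alpha0, alpha1] *)
Definition HT := {mpoly int[2]}.
Definition alpha0 {R : nzRingType} : {mpoly R[2]} := 'X_(@ord0 1).
Definition alpha1 {R : nzRingType} : {mpoly R[2]} := 'X_(@ord_max 1).

Definition qm (m : nat) : HT :=
  ((uphalf m) ^ 2)%:R *: alpha0 + ((m./2) ^ 2 + m./2)%:R *: alpha1.

(* This is the structure of H^*_T(X) with
   Kumar's basis described in the context. *)
Definition lin_indep (A : lmodType HT) (eps : nat -> A) : Prop :=
  forall (N : nat) (a : nat -> HT),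
    \sum_(k < N) a k *: eps k = 0 -> forall k, (k < N)%N -> a k = 0.

Definition SchubertBasis (A : comAlgType HT) (eps : nat -> A) : Prop :=
  [/\ lin_indep eps,
      eps 0%N = 1 &
      forall m : nat, eps 1%N * eps m = qm m *: eps m + (m.+1)%:R *: eps m.+1].

Definition StructConsts (A : comAlgType HT) (eps : nat -> A)
  (c : nat -> nat -> nat -> HT) : Prop :=
  forall n m : nat,
    eps n * eps m = \sum_(maxn n m <= k < (n + m).+1) c n m k *: eps k.

Definition toQ (p : HT) : {mpoly rat[2]} := map_mpoly (fun z : int => z%:~R) p.

From HB Require Import structures.
From mathcomp Require Import all_boot all_order all_algebra.
From mathcomp Require Import mpoly.
From mathcomp Require Import ring zify.
Import Order.TTheory GRing.Theory Num.Theory.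
Local Open Scope ring_scope.

(* The Chevalley formula for eps 1 and the associativity
   eps 1 * (eps n * eps m) = (eps 1 * eps n) * eps m give, on the coefficient
   of eps k, the recursion in n
     (n + 1) c^k_{n+1,m} = (q_k - q_n) c^k_{n,m} + k c^{k-1}_{n,m}.
   For k = n + m + 1 it yields c^{n+m}_{n,m} = C(n + m, n); for k = n + m it
   telescopes to
     n! m! c^{n+m-1}_{n,m} = (n + m - 1)! (Q(n + m) - Q(n) - Q(m)),
   Q(N) = sum_{j < N} q_j.  Summing q_j over each parity class of j gives
   12 Q(N) = (N^3 + 2N - 3N [N odd]) alpha0 + (N^3 - 4N + 3N [N odd]) alpha1,
   and the four parity cases of the formula drop out. *)

Lemma natrS_HT_mulI k : injective ( *%R (k.+1%:R : HT)).
Proof. by apply/mulfI; rewrite -mpolyC_nat mpolyC_eq0 pnatr_eq0. Qed.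

Lemma fact_predn {k} : (0 < k)%N -> k`! = (k * k.-1`!)%N.
Proof. by case: k => // k _; rewrite factS. Qed.

Lemma toQB p q : toQ (p - q) = toQ p - toQ q.
Proof. exact: raddfB. Qed.

Lemma toQ_scale_div {a b : nat} {p q : HT} : (0 < a)%N ->
  a%:R * p = b%:R * q -> toQ p = (b%:R / a%:R : rat) *: toQ q.
Proof.
move=> a_gt0 /(congr1 toQ); rewrite /toQ !rmorphM !rmorph_nat.
rewrite -!mpolyC_nat !mul_mpolyC => eq_ab.
by rewrite mulrC -scalerA -eq_ab scalerA mulVf ?scale1r // pnatr_eq0 -lt0n.
Qed.

Definition sum_qm N : HT := \sum_(j < N) qm j.

Section StructureConstants.

Context {A : comAlgType HT} {eps : nat -> A} {c : nat -> nat -> nat -> HT}.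
Hypotheses (eps_Schubert : SchubertBasis eps) (eps_mul : StructConsts eps c).

Lemma eps_coef_inj N (a b : nat -> HT) :
  \sum_(k < N) a k *: eps k = \sum_(k < N) b k *: eps k ->
  forall k, (k < N)%N -> a k = b k.
Proof.
have [indep _ _] := eps_Schubert.
move=> eq_ab k lt_kN; apply: subr0_eq.
apply: (indep N (fun k => a k - b k)) => //.
under eq_bigr do rewrite scalerBl.
by rewrite sumrB eq_ab subrr.
Qed.

(* [c n m k] is a junk value outside [max n m <= k <= n + m]; [cz] resets it to 0. *)
Definition cz n m k := if (maxn n m <= k <= n + m)%N then c n m k else 0.

Lemma czE n m k : (maxn n m <= k <= n + m)%N -> cz n m k = c n m k.
Proof. by rewrite /cz => ->. Qed.

Lemma cz_out n m k : (n + m < k)%N -> cz n m k = 0.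
Proof. by move=> lt_nm_k; rewrite /cz [(k <= _)%N]leqNgt lt_nm_k andbF. Qed.

Lemma mul_eps_cz n m N : (n + m < N)%N ->
  eps n * eps m = \sum_(k < N) cz n m k *: eps k.
Proof.
move=> lt_nm_N; rewrite eps_mul big_geq_mkord.
rewrite (big_ord_widen_cond N (fun k => true && (maxn n m <= k)%N)
  (fun k => c n m k *: eps k) lt_nm_N) big_mkcond.
by apply: eq_bigr => k _; rewrite /cz ltnS; case: ifP; rewrite ?scale0r.
Qed.

Lemma cz_Chevalley n m k :
  cz n m k * qm k + k%:R * cz n m k.-1 = qm n * cz n m k + n.+1%:R * cz n.+1 m k.
Proof.
have [_ _ eps1_mul] := eps_Schubert.
pose N := (k + n + m).+2.
pose lhs j := cz n m j * qm j + j%:R * cz n m j.-1.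
pose rhs j := qm n * cz n m j + n.+1%:R * cz n.+1 m j.
have shift : \sum_(j < N) (cz n m j * j.+1%:R) *: eps j.+1
           = \sum_(j < N) (j%:R * cz n m j.-1) *: eps j.
  rewrite big_ord_recr cz_out /=; last by rewrite /N; lia.
  rewrite mul0r scale0r addr0 [RHS]big_ord_recl mul0r scale0r add0r.
  by apply: eq_bigr => j _; rewrite lift0 mulrC.
have left_assoc : eps 1 * (eps n * eps m) = \sum_(j < N) lhs j *: eps j.
  rewrite (mul_eps_cz _ _ N) ?mulr_sumr; last by rewrite /N; lia.
  under eq_bigr do rewrite -scalerAr eps1_mul scalerDr !scalerA.
  by rewrite big_split /= shift -big_split; apply: eq_bigr => j _; rewrite scalerDl.
have right_assoc : eps 1 * eps n * eps m = \sum_(j < N) rhs j *: eps j.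
  rewrite eps1_mul mulrDl -!scalerAl !(mul_eps_cz _ _ N) ?addSn; try by rewrite /N; lia.
  rewrite !scaler_sumr -big_split; apply: eq_bigr => j _.
  by rewrite !scalerA scalerDl.
move: (mulrA (eps 1) (eps n) (eps m)).
rewrite left_assoc right_assoc => /(@eps_coef_inj N lhs rhs).
by apply; rewrite /N; lia.
Qed.

Lemma c_top n m : c n m (n + m) = 'C(n + m, n)%:R.
Proof.
have [_ eps0 _] := eps_Schubert.
elim: n => [|n IH].
  pose d j : HT := (j == m)%:R.
  have eps_m : eps m = \sum_(j < m.+1) d j *: eps j.
    rewrite big_ord_recr /= big1 ?add0r => [|j _]; first by rewrite /d eqxx scale1r.
    by rewrite /d ltn_eqF ?scale0r.
  move: (mul_eps_cz 0 m m.+1 (ltnSn m)); rewrite eps0 mul1r eps_m.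
  move=> /(@eps_coef_inj _ d (cz 0 m)) /(_ m (ltnSn m)).
  by rewrite /d eqxx czE ?bin0 // max0n leqnn.
have := cz_Chevalley n m (n + m).+1.
rewrite cz_out ?mul0r ?mulr0 ?add0r ?czE ?addSn ?IH //=; try lia.
move=> e; apply: (natrS_HT_mulI n); rewrite -e -!natrM.
by rewrite -mul_bin_diag.
Qed.

Lemma cz_subtop n m : (0 < m)%N ->
  (n`! * m`!)%:R * cz n m (n + m).-1
  = (n + m).-1`!%:R * (sum_qm (n + m) - sum_qm n - sum_qm m).
Proof.
move=> m_gt0; elim: n => [|n IH].
  rewrite /cz max0n !add0n ifN; last lia.
  by rewrite /sum_qm big_ord0 subr0 subrr !mulr0.
have fact_nm : (n`! * m`!)%:R * 'C(n + m, n)%:R = (n + m)`!%:R :> HT.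
  by rewrite -natrM mulnC -(bin_fact (leq_addr m n)) addKn.
have fact_pred : (n + m)%:R * (n + m).-1`!%:R = (n + m)`!%:R :> HT.
  have nm_gt0 : (0 < n + m)%N by lia.
  by rewrite (fact_predn nm_gt0) natrM.
have step : n.+1%:R * cz n.+1 m (n + m)
    = 'C(n + m, n)%:R * (qm (n + m) - qm n) + (n + m)%:R * cz n m (n + m).-1.
  have := cz_Chevalley n m (n + m); rewrite czE ?c_top; last lia.
  by move=> e; apply: (@addrI _ (qm n * 'C(n + m, n)%:R)); rewrite -e; ring.
rewrite addSn /= factS -mulnA mulnC natrM -mulrA step mulrDr mulrA fact_nm.
rewrite mulrCA IH mulrA fact_pred -mulrDr /sum_qm !big_ord_recr /=.
by congr (_ * _); ring.
Qed.

End StructureConstants.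

Lemma sum_uphalf_sq N :
  (12 * \sum_(j < N) uphalf j ^ 2 + 3 * N * odd N = N ^ 3 + 2 * N)%N.
Proof.
elim: N => [|N IH]; first by rewrite big_ord0.
rewrite big_ord_recr /= uphalf_half.
move: IH (odd_double_half N); set S := (\sum_(j < N) _)%N; clearbody S.
move: (N./2) => k; case: (odd N) => /= IH eN; subst N; nia.
Qed.

Lemma sum_half_sq N :
  (12 * \sum_(j < N) (j./2 ^ 2 + j./2) + 4 * N = N ^ 3 + 3 * N * odd N)%N.
Proof.
elim: N => [|N IH]; first by rewrite big_ord0.
rewrite big_ord_recr /=.
move: IH (odd_double_half N); set S := (\sum_(j < N) _)%N; clearbody S.
move: (N./2) => k; case: (odd N) => /= IH eN; subst N; nia.
Qed.

Lemma sum_qmE N : sum_qm N =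
  (\sum_(j < N) uphalf j ^ 2)%:R *: alpha0 + (\sum_(j < N) (j./2 ^ 2 + j./2))%:R *: alpha1.
Proof. by rewrite /sum_qm big_split /= -!scaler_suml -!natr_sum. Qed.

Definition lin_alpha (u0 u1 : rat) : {mpoly rat[2]} := u0 *: alpha0 + u1 *: alpha1.

Lemma lin_alphaB u0 u1 v0 v1 :
  lin_alpha u0 u1 - lin_alpha v0 v1 = lin_alpha (u0 - v0) (u1 - v1).
Proof. by rewrite /lin_alpha !scalerBl opprD addrACA. Qed.

Lemma lin_alphaZ k u0 u1 : k *: lin_alpha u0 u1 = lin_alpha (k * u0) (k * u1).
Proof. by rewrite /lin_alpha scalerDr !scalerA. Qed.

Lemma toQ_sum_qm N : toQ (sum_qm N) =
  lin_alpha (((N ^ 3 + 2 * N)%:R - (3 * N * odd N)%:R) / 12)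
            (((N ^ 3 + 3 * N * odd N)%:R - (4 * N)%:R) / 12).
Proof.
rewrite sum_qmE /toQ raddfD /= !map_mpolyZ /alpha0 /alpha1 !map_mpolyX.
rewrite -(sum_uphalf_sq N) -(sum_half_sq N) !(natrD _ (12 * _)%N) !addrK !(natrM _ 12).
by rewrite !rmorph_nat !(mulrC 12) !mulfK.
Qed.

Definition subtop_formula (n m : nat) : {mpoly rat[2]} :=
  if ~~ odd n && ~~ odd m then
     ((n + m)`!%:R / (4 * ((n.-1)`! * (m.-1)`!)%:R) : rat)
       *: (alpha0 + alpha1)
   else if odd n && odd m then
     ((n + m)`!%:R / (4 * (n`! * m`!)%:R) : rat)
       *: ((1 + (n * m)%:R : rat) *: alpha0 + (-1 + (n * m)%:R : rat) *: alpha1)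
   else if ~~ odd n && odd m then
     ((n + m).-1`!%:R / (4 * ((n.-1)`! * m`!)%:R) : rat)
       *: ((-1 + (n * m + m ^ 2)%:R : rat) *: alpha0
           + (1 + (n * m + m ^ 2)%:R : rat) *: alpha1)
   else
     ((n + m).-1`!%:R / (4 * (n`! * (m.-1)`!)%:R) : rat)
       *: ((-1 + (n * m + n ^ 2)%:R : rat) *: alpha0
           + (1 + (n * m + n ^ 2)%:R : rat) *: alpha1).

Lemma subtop_formulaE n m : (0 < n)%N -> (0 < m)%N ->
  subtop_formula n m
  = ((n + m).-1`!%:R / (n`! * m`!)%:R : rat) *: toQ (sum_qm (n + m) - sum_qm n - sum_qm m).
Proof.
move=> n_gt0 m_gt0; have nm_gt0 : (0 < n + m)%N by lia.
rewrite !toQB !toQ_sum_qm !lin_alphaB lin_alphaZ /lin_alpha /subtop_formula.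
rewrite (fact_predn n_gt0) (fact_predn m_gt0) (fact_predn nm_gt0) oddD.
have n0 : n%:R != 0 :> rat by rewrite pnatr_eq0 -lt0n.
have m0 : m%:R != 0 :> rat by rewrite pnatr_eq0 -lt0n.
have a0 : (n.-1)`!%:R != 0 :> rat by rewrite pnatr_eq0 -lt0n fact_gt0.
have b0 : (m.-1)`!%:R != 0 :> rat by rewrite pnatr_eq0 -lt0n fact_gt0.
case: (odd n); case: (odd m); rewrite /= ?scalerDr ?scalerA !natrM !natrD !natrX.
all: by congr (_ *: _ + _ *: _); field; rewrite n0 m0 a0 b0.
Qed.

Theorem mainTheorem6 (A : comAlgType HT) (eps : nat -> A)
  (c : nat -> nat -> nat -> HT) :
  SchubertBasis eps -> StructConsts eps c ->
  forall n m : nat, (1 <= n)%N -> (1 <= m)%N ->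
    c n m (n + m)%N = ('C(n + m, n))%:R /\
    toQ (c n m (n + m).-1) =
      (if ~~ odd n && ~~ odd m then
         ((n + m)`!%:R / (4 * ((n.-1)`! * (m.-1)`!)%:R) : rat)
           *: (alpha0 + alpha1)
       else if odd n && odd m then
         ((n + m)`!%:R / (4 * (n`! * m`!)%:R) : rat)
           *: ((1 + (n * m)%:R : rat) *: alpha0 + (-1 + (n * m)%:R : rat) *: alpha1)
       else if ~~ odd n && odd m then
         ((n + m).-1`!%:R / (4 * ((n.-1)`! * m`!)%:R) : rat)
           *: ((-1 + (n * m + m ^ 2)%:R : rat) *: alpha0
               + (1 + (n * m + m ^ 2)%:R : rat) *: alpha1)
       else
         ((n + m).-1`!%:R / (4 * (n`! * (m.-1)`!)%:R) : rat)
           *: ((-1 + (n * m + n ^ 2)%:R : rat) *: alpha0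
               + (1 + (n * m + n ^ 2)%:R : rat) *: alpha1)).
Proof.
move=> eps_Schubert eps_mul n m n_gt0 m_gt0.
split; first exact: c_top eps_Schubert eps_mul n m.
have nm_fact_gt0 : (0 < n`! * m`!)%N by rewrite muln_gt0 !fact_gt0.
have := cz_subtop eps_Schubert eps_mul n m m_gt0.
rewrite czE; last lia.
move/(toQ_scale_div nm_fact_gt0) ->.
exact/esym/subtop_formulaE.
Qed.
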